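(* Let $0\le\underline{\tau}<\overline{\tau}<\infty$, $\gamma\ge 0$, $\delta\ge0$, let $f$ be a piecewise continuous probability density supported on $[\underline{\tau},\overline{\tau}]$, and let $\beta:[0,\infty)\to(0,\infty)$ be continuous and decreasing with $\lim_{x\to+\infty}\beta(x)=0$. Let $(x(t),y(t))$ be a solution of the system $$x'(t)=-\big(\delta+\beta(x(t))\big)x(t)+2\int_{\underline{\tau}}^{\overline{\tau}}e^{-\gamma\tau}f(\tau)\beta(x(t-\tau))x(t-\tau)\,d\tau,$$ $$y'(t)=-\gamma y(t)+\beta(x(t))x(t)-\int_{\underline{\tau}}^{\overline{\tau}}e^{-\gamma\tau}f(\tau)\beta(x(t-\tau))x(t-\tau)\,d\tau,\qquad t\ge\overline{\tau},$$ arising from the hematopoiesis model described in the context, so that $$y(t)=\int_{\underline{\tau}}^{\overline{\tau}}f(\tau)\left(\int_{t-\tau}^{t}e^{-\gamma(t-s)}\beta(x(s))x(s)\,ds\right)d\tau\quad\text{for } t\ge\overline{\tau}.$$ If $\lim_{t\to+\infty}x(t)$ exists and equals $C\ge0$, then $$\lim_{t\to+\infty}y(t)=\begin{cases}\beta(C)C\displaystyle\int_{\underline{\tau}}^{\overline{\tau}}f(\tau)\frac{1-e^{-\gamma\tau}}{\gamma}\,d\tau,&\gamma>0,\\[2mm] \beta(C)C\displaystyle\int_{\underline{\tau}}^{\overline{\tau}}\tau f(\tau)\,d\tau,&\gamma=0.\end{cases}$$ Moreover, if $x(t)$ is $P$-periodic, then $y(t)$ is also $P$-periodic.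
   Context: The model: $x(t)\ge0$ is the total resting (G$_0$) stem cell population and $y(t)\ge0$ the total proliferating population; resting cells die/differentiate at rate $\delta$ and enter proliferation at rate $\beta(x(t))$; proliferating cells die at rate $\gamma$ and divide (each into two resting cells) after a time distributed with density $f$. The function $x\mapsto x\beta(x)$ is Lipschitz continuous; for every initial resting population $\mu\ge0$ the model has a unique nonnegative continuous solution $(x,y)$ on $[0,\infty)$, which for $t\ge\overline{\tau}$ satisfies the displayed system and the displayed explicit formula for $y$. *)

From Stdlib Require Import Reals.
From Coquelicot Require Import Coquelicot.
Open Scope R_scope.

Definition piecewise_continuous (f : R -> R) (a b : R) : Prop :=
  exists (n : nat) (p : nat -> R),
    p 0%nat = a /\ p n = b /\
    (forall i, (i < n)%nat -> p i < p (S i)) /\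
    (forall i, (i < n)%nat ->
       (forall t, p i < t < p (S i) -> continuous f t) /\
       (exists l, filterlim f (at_right (p i)) (locally l)) /\
       (exists r, filterlim f (at_left (p (S i))) (locally r))).

Definition pc_density_on (f : R -> R) (a b : R) : Prop :=
  piecewise_continuous f a b /\
  (forall t, 0 <= f t) /\
  (forall t, t < a \/ b < t -> f t = 0) /\
  is_RInt f a b 1.

Definition continuous_on_nonneg (g : R -> R) : Prop :=
  forall u, 0 <= u -> filterlim g (within (fun v => 0 <= v) (locally u)) (locally (g u)).

From Stdlib Require Import Reals Lra Lia.
From Coquelicot Require Import Coquelicot.
Open Scope R_scope.

(* With h(s) = beta(x(s)) x(s), the formula reads
   y(t) = int f(tau) int_{t-tau}^t e^{-gamma (t-s)} h(s) ds dtau.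
   If h -> L, each inner integral is within tau * sup_{s >= t - th} |h(s) - L| of
   L int_0^tau e^{-gamma u} du, uniformly in tau, and integrating this against the
   density f gives the limit; the kernel mass int_0^tau e^{-gamma u} du is
   (1 - e^{-gamma tau})/gamma, or tau when gamma = 0.  If x, hence h, is P-periodic,
   translating the inner integral by P shows that y is P-periodic. *)

Lemma continuous_on_nonneg_continuous (g : R -> R) (s : R) :
  continuous_on_nonneg g -> 0 < s -> continuous g s.
Proof.
  intros Hg Hs P HP.
  pose proof (Hg s (Rlt_le _ _ Hs) P HP) as Hnear. unfold filtermap, within in Hnear |- *.
  generalize (filter_and _ _ Hnear (open_gt 0 s Hs)).
  apply filter_imp. intros v [Hv Hpos]. apply Hv. lra.
Qed.

Lemma continuous_on_nonneg_comp (g x : R -> R) (s : R) :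
  continuous_on_nonneg g -> continuous x s -> locally s (fun v => 0 <= x v) ->
  continuous (fun v => g (x v)) s.
Proof.
  intros Hg Hx Hnonneg.
  apply filterlim_comp with (G := within (fun v => 0 <= v) (locally (x s))).
  - intros P HP.
    generalize (filter_and _ _ (Hx _ HP) Hnonneg).
    apply filter_imp. intros v [Hv Hpos]. now apply Hv.
  - apply Hg. exact (locally_singleton _ _ Hnonneg).
Qed.

Lemma is_lim_on_nonneg_comp (g x : R -> R) (C : R) :
  continuous_on_nonneg g -> 0 <= C -> (forall t, 0 <= t -> 0 <= x t) ->
  is_lim x p_infty C -> is_lim (fun t => g (x t)) p_infty (g C).
Proof.
  intros Hg HC Hnonneg Hx.
  apply filterlim_comp with (G := within (fun v => 0 <= v) (locally C)).
  - intros P HP.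
    assert (Hev : Rbar_locally' p_infty (fun t => 0 <= x t)).
    { exists 0. intros t Ht. apply Hnonneg. lra. }
    unfold filtermap.
    generalize (filter_and (F := Rbar_locally' p_infty) _ _ (Hx _ HP) Hev).
    apply filter_imp. intros t [Ht Hpos]. now apply Ht.
  - now apply Hg.
Qed.

Lemma continuous_flux (beta x : R -> R) (s : R) :
  continuous_on_nonneg beta -> continuous_on_nonneg x -> (forall t, 0 <= t -> 0 <= x t) ->
  0 < s -> continuous (fun v => beta (x v) * x v) s.
Proof.
  intros Hbeta Hx Hnonneg Hs.
  apply (continuous_mult (fun v => beta (x v)) x); [| now apply continuous_on_nonneg_continuous].
  apply continuous_on_nonneg_comp; [exact Hbeta | now apply continuous_on_nonneg_continuous |].
  generalize (open_gt 0 s Hs). apply filter_imp. intros v Hv. apply Hnonneg. lra.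
Qed.

Lemma exp_le_1 (u : R) : u <= 0 -> exp u <= 1.
Proof.
  intros Hu. rewrite <- exp_0.
  destruct (Rle_lt_or_eq_dec _ _ Hu) as [Hlt | ->]; [left; now apply exp_increasing | lra].
Qed.

Definition patch_ends (f : R -> R) (a b l r : R) (t : R) : R :=
  if Rle_dec t a then l else if Rle_dec b t then r else f t.

Lemma continuous_patch_ends (f : R -> R) (a b l r z : R) : a < b ->
  (forall t, a < t < b -> continuous f t) ->
  filterlim f (at_right a) (locally l) ->
  filterlim f (at_left b) (locally r) ->
  a <= z <= b -> continuous (patch_ends f a b l r) z.
Proof.
  intros Hab Hf Hl Hr Hz P HP. unfold filtermap.
  unfold patch_ends at 1 in HP.
  destruct (Rle_dec z a) as [Hza | Hza].
  - assert (Ez : z = a) by lra. subst z.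
    pose proof (Hl P HP) as Hnear. unfold filtermap, at_right, within in Hnear.
    generalize (filter_and _ _ Hnear (open_lt b a Hab)).
    apply filter_imp. intros t [Ht Htb]. unfold patch_ends.
    destruct (Rle_dec t a); [exact (locally_singleton _ _ HP) |].
    destruct (Rle_dec b t); [lra | apply Ht; lra].
  - destruct (Rle_dec b z) as [Hbz | Hbz].
    + assert (Ez : z = b) by lra. subst z.
      pose proof (Hr P HP) as Hnear. unfold filtermap, at_left, within in Hnear.
      generalize (filter_and _ _ Hnear (open_gt a b Hab)).
      apply filter_imp. intros t [Ht Hta]. unfold patch_ends.
      destruct (Rle_dec t a); [lra |].
      destruct (Rle_dec b t); [exact (locally_singleton _ _ HP) | apply Ht; lra].
    + assert (Hz' : a < z < b) by lra.
      pose proof (Hf z Hz' P HP) as Hnear. unfold filtermap in Hnear.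
      generalize (filter_and _ _ Hnear (open_and _ _ (open_gt a) (open_lt b) z Hz')).
      apply filter_imp. intros t [Ht Htab]. unfold patch_ends.
      destruct (Rle_dec t a); [lra |]. destruct (Rle_dec b t); [lra | exact Ht].
Qed.

Lemma ex_RInt_mult_piece (f g : R -> R) (a b l r : R) : a < b ->
  (forall t, a < t < b -> continuous f t) ->
  filterlim f (at_right a) (locally l) ->
  filterlim f (at_left b) (locally r) ->
  (forall s, a <= s <= b -> continuous g s) ->
  ex_RInt (fun t => f t * g t) a b.
Proof.
  intros Hab Hf Hl Hr Hg.
  apply ex_RInt_ext with (fun t => patch_ends f a b l r t * g t).
  - intros t Ht. rewrite Rmin_left, Rmax_right in Ht by lra. unfold patch_ends.
    destruct (Rle_dec t a); [lra |]. destruct (Rle_dec b t); [lra | reflexivity].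
  - apply (ex_RInt_continuous (V := R_CompleteNormedModule)). intros z Hz.
    rewrite Rmin_left, Rmax_right in Hz by lra.
    apply (continuous_mult (patch_ends f a b l r) g); [| now apply Hg].
    now apply continuous_patch_ends.
Qed.

Lemma ex_RInt_mult_piecewise_continuous (f g : R -> R) (a b : R) :
  piecewise_continuous f a b -> (forall s, a <= s <= b -> continuous g s) ->
  ex_RInt (fun t => f t * g t) a b.
Proof.
  intros [n [p [Hp0 [Hpn [Hinc Hpiece]]]]] Hg.
  assert (Hmono : forall i j, (i <= j <= n)%nat -> p i <= p j).
  { intros i j [Hij Hjn]. induction Hij; [lra |].
    specialize (IHHij ltac:(lia)). specialize (Hinc m ltac:(lia)). lra. }
  subst a b.
  assert (Hk : forall k, (k <= n)%nat -> ex_RInt (fun t => f t * g t) (p 0%nat) (p k)).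
  { induction k as [| k IHk]; intros Hk; [apply ex_RInt_point |].
    apply ex_RInt_Chasles with (p k); [apply IHk; lia |].
    destruct (Hpiece k ltac:(lia)) as [Hf [[l Hl] [r Hr]]].
    apply ex_RInt_mult_piece with l r; auto.
    intros s Hs. apply Hg.
    pose proof (Hmono 0%nat k ltac:(lia)). pose proof (Hmono (S k) n ltac:(lia)). lra. }
  now apply Hk.
Qed.

Definition discounted_integral (gamma : R) (h : R -> R) (t tau : R) : R :=
  RInt (fun s => exp (- gamma * (t - s)) * h s) (t - tau) t.

Lemma discounted_integral_one_pos (gamma t tau : R) : 0 < gamma ->
  discounted_integral gamma (fun _ => 1) t tau = (1 - exp (- gamma * tau)) / gamma.
Proof.
  intros Hgamma. apply is_RInt_unique.
  replace ((1 - exp (- gamma * tau)) / gamma) with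
    (minus (exp (- gamma * (t - t)) / gamma) (exp (- gamma * (t - (t - tau))) / gamma)).
  2:{ unfold minus, plus, opp; simpl.
      replace (- gamma * (t - t)) with 0 by ring. rewrite exp_0.
      replace (- gamma * (t - (t - tau))) with (- gamma * tau) by ring. field. lra. }
  apply (is_RInt_derive (V := R_CompleteNormedModule) (fun s => exp (- gamma * (t - s)) / gamma)).
  - intros s _. auto_derive; [easy |]. replace (t + - s) with (t - s) by ring. field. lra.
  - intros s _. apply (ex_derive_continuous (V := R_NormedModule)). auto_derive. easy.
Qed.

Lemma discounted_integral_one_zero (t tau : R) :
  discounted_integral 0 (fun _ => 1) t tau = tau.
Proof.
  unfold discounted_integral.
  rewrite (RInt_ext _ (fun _ => 1)) by (intros s _; rewrite Rmult_1_r, <- exp_0; f_equal; ring).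
  rewrite RInt_const. change ((t - (t - tau)) * 1 = tau). ring.
Qed.

Section DiscountedIntegral.

Variables (gamma : R) (h : R -> R).
Hypothesis h_cont : forall s, 0 < s -> continuous h s.

Lemma ex_RInt_discounted (t a b : R) : 0 < a -> 0 < b ->
  ex_RInt (fun s => exp (- gamma * (t - s)) * h s) a b.
Proof.
  intros Ha Hb. apply (ex_RInt_continuous (V := R_CompleteNormedModule)). intros s Hs.
  assert (0 < Rmin a b) by (apply Rmin_glb_lt; lra).
  apply (continuous_mult (fun s => exp (- gamma * (t - s))) h); [| apply h_cont; lra].
  apply (ex_derive_continuous (V := R_NormedModule)). auto_derive. easy.
Qed.

Lemma continuous_discounted_integral (t tau : R) : 0 <= tau < t ->
  continuous (discounted_integral gamma h t) tau.
Proof.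
  intros [Htau0 Htau].
  set (F := fun z => RInt (fun s => exp (- gamma * (t - s)) * h s) t z).
  apply continuous_ext_loc with (fun u => - F (t - u)).
  - generalize (open_lt t tau Htau). apply filter_imp. intros u Hu.
    apply (opp_RInt_swap (V := R_CompleteNormedModule)), ex_RInt_discounted; lra.
  - apply (continuous_opp (K := R_AbsRing) (V := R_NormedModule) (fun u => F (t - u))).
    apply (continuous_comp (fun u => t - u) F).
    + apply (ex_derive_continuous (V := R_NormedModule)). auto_derive. easy.
    + apply (continuous_RInt_1 (V := R_NormedModule)
        (fun s => exp (- gamma * (t - s)) * h s) t (t - tau) F).
      generalize (open_gt 0 (t - tau) ltac:(lra)). apply filter_imp. intros z Hz.
      apply (RInt_correct (V := R_CompleteNormedModule)), ex_RInt_discounted; lra.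
Qed.

Lemma discounted_integral_periodic (P t tau : R) : 0 <= P -> 0 <= tau < t ->
  (forall s, 0 <= s -> h (s + P) = h s) ->
  discounted_integral gamma h (t + P) tau = discounted_integral gamma h t tau.
Proof.
  intros HP Htau Hper. unfold discounted_integral.
  set (G := fun s => exp (- gamma * (t + P - s)) * h s).
  replace (t + P - tau) with (1 * (t - tau) + P) by ring.
  replace (t + P) with (1 * t + P) by ring.
  rewrite <- RInt_comp_lin by (apply ex_RInt_discounted; lra).
  apply RInt_ext. intros s Hs. rewrite Rmin_left, Rmax_right in Hs by lra.
  unfold scal, G; simpl; unfold mult; simpl.
  replace (1 * s + P) with (s + P) by ring. rewrite Hper by lra.
  replace (t + P - (s + P)) with (t - s) by ring. ring.
Qed.

Lemma discounted_integral_near_const (L eps t tau : R) :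
  0 <= gamma -> 0 <= tau < t ->
  (forall s, t - tau <= s <= t -> Rabs (h s - L) <= eps) ->
  Rabs (discounted_integral gamma h t tau - L * discounted_integral gamma (fun _ => 1) t tau)
    <= tau * eps.
Proof.
  intros Hgamma Htau Hclose.
  assert (Hone : ex_RInt (fun s => exp (- gamma * (t - s)) * 1) (t - tau) t).
  { apply (ex_RInt_continuous (V := R_CompleteNormedModule)). intros s _.
    apply (ex_derive_continuous (V := R_NormedModule)). auto_derive. easy. }
  pose proof (is_RInt_minus (V := R_NormedModule) _ _ _ _ _ _
    (RInt_correct _ _ _ (ex_RInt_discounted t (t - tau) t ltac:(lra) ltac:(lra)))
    (is_RInt_scal _ _ _ L _ (RInt_correct _ _ _ Hone))) as Hdiff.
  apply Rle_trans with ((t - (t - tau)) * eps); [| right; ring].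
  refine (norm_RInt_le_const (V := R_NormedModule) _ _ _ _ eps _ _ Hdiff); [lra |].
  intros s Hs. change (Rabs (exp (- gamma * (t - s)) * h s - L * (exp (- gamma * (t - s)) * 1)) <= eps).
  replace (exp (- gamma * (t - s)) * h s - L * (exp (- gamma * (t - s)) * 1))
    with (exp (- gamma * (t - s)) * (h s - L)) by ring.
  rewrite Rabs_mult, Rabs_pos_eq by (left; apply exp_pos).
  assert (exp (- gamma * (t - s)) <= 1).
  { apply exp_le_1. assert (0 <= gamma * (t - s)) by (apply Rmult_le_pos; lra). lra. }
  pose proof (Hclose s Hs). pose proof (Rabs_pos (h s - L)). pose proof (exp_pos (- gamma * (t - s))).
  nra.
Qed.

End DiscountedIntegral.

Lemma is_RInt_density_mult_abs_le (f g : R -> R) (a b I M : R) : a <= b ->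
  (forall t, 0 <= f t) -> is_RInt f a b 1 -> is_RInt (fun t => f t * g t) a b I ->
  (forall t, a <= t <= b -> Rabs (g t) <= M) -> Rabs I <= M.
Proof.
  intros Hab Hf Hf1 HI Hg.
  replace M with (scal M 1) by (change (M * 1 = M); ring).
  apply (norm_RInt_le (V := R_NormedModule) (fun t => f t * g t) (fun t => scal M (f t))
    a b I _ Hab);
    [| exact HI | exact (is_RInt_scal _ _ _ M _ Hf1)].
  intros t Ht. change (Rabs (f t * g t) <= M * f t).
  rewrite Rabs_mult, (Rabs_pos_eq (f t)) by apply Hf.
  rewrite Rmult_comm. apply Rmult_le_compat_r; [apply Hf | now apply Hg].
Qed.

Lemma is_lim_density_discounted_integral (a b gamma L : R) (f h E : R -> R) :
  0 <= a < b -> 0 <= gamma -> pc_density_on f a b ->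
  (forall s, 0 < s -> continuous h s) -> is_lim h p_infty L ->
  (forall tau, continuous E tau) ->
  (forall t tau, a <= tau <= b -> discounted_integral gamma (fun _ => 1) t tau = E tau) ->
  is_lim (fun t => RInt (fun tau => f tau * discounted_integral gamma h t tau) a b) p_infty
    (L * RInt (fun tau => f tau * E tau) a b).
Proof.
  intros Hab Hgamma [Hpc [Hfpos [_ Hf1]]] Hh_cont Hh_lim HE_cont HE.
  apply is_lim_spec in Hh_lim. apply is_lim_spec. intros eps.
  assert (Heps' : 0 < eps / (b + 1)) by (apply Rdiv_lt_0_compat; [apply cond_pos | lra]).
  destruct (Hh_lim (mkposreal _ Heps')) as [T HT]. simpl in HT.
  exists (Rmax (T + b) b). intros t Ht.
  assert (HtT : T + b < t) by exact (Rle_lt_trans _ _ _ (Rmax_l _ _) Ht).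
  assert (Htb : b < t) by exact (Rle_lt_trans _ _ _ (Rmax_r _ _) Ht).
  assert (Hclose : forall tau, a <= tau <= b ->
    Rabs (discounted_integral gamma h t tau - L * E tau) <= b * (eps / (b + 1))).
  { intros tau Htau. rewrite <- (HE t tau Htau).
    apply Rle_trans with (tau * (eps / (b + 1))).
    - apply discounted_integral_near_const; [exact Hh_cont | exact Hgamma | lra |].
      intros s Hs. left. apply HT. lra.
    - apply Rmult_le_compat_r; lra. }
  assert (HintD : ex_RInt (fun tau => f tau * discounted_integral gamma h t tau) a b).
  { apply ex_RInt_mult_piecewise_continuous; [exact Hpc |].
    intros tau Htau. apply continuous_discounted_integral; [exact Hh_cont | lra]. }
  assert (HintE : ex_RInt (fun tau => f tau * E tau) a b).
  { apply ex_RInt_mult_piecewise_continuous; auto. }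
  pose proof (is_RInt_minus (V := R_NormedModule) _ _ _ _ _ _
    (RInt_correct _ _ _ HintD) (is_RInt_scal _ _ _ L _ (RInt_correct _ _ _ HintE))) as Hdiff.
  apply (is_RInt_ext _ (fun tau => f tau * (discounted_integral gamma h t tau - L * E tau)))
    in Hdiff; [| intros tau _; unfold minus, plus, opp, scal; simpl; unfold mult; simpl; ring].
  apply Rle_lt_trans with (b * (eps / (b + 1))).
  - refine (is_RInt_density_mult_abs_le _ _ _ _ _ _ _ Hfpos Hf1 Hdiff Hclose). lra.
  - replace (b * (eps / (b + 1))) with (eps - eps / (b + 1)) by (field; lra). lra.
Qed.

Theorem lemma2p1
  (tl th gamma delta : R) (f beta x y : R -> R)
  (Htau : 0 <= tl < th) (Hgamma : 0 <= gamma) (Hdelta : 0 <= delta)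
  (Hf : pc_density_on f tl th)
  (Hbeta_pos : forall u, 0 <= u -> 0 < beta u)
  (Hbeta_cont : continuous_on_nonneg beta)
  (Hbeta_dec : forall u v, 0 <= u -> u <= v -> beta v <= beta u)
  (Hbeta_lim : is_lim beta p_infty 0)
  (Hx_nonneg : forall t, 0 <= t -> 0 <= x t)
  (Hy_nonneg : forall t, 0 <= t -> 0 <= y t)
  (Hx_cont : continuous_on_nonneg x)
  (Hy_cont : continuous_on_nonneg y)
  (Hx_ode : forall t, th < t ->
     is_derive x t
       (- (delta + beta (x t)) * x t
        + 2 * RInt (fun tau => exp (- gamma * tau) * f tau
                              * beta (x (t - tau)) * x (t - tau)) tl th))
  (Hy_ode : forall t, th < t ->
     is_derive y t
       (- gamma * y t + beta (x t) * x t
        - RInt (fun tau => exp (- gamma * tau) * f tau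
                           * beta (x (t - tau)) * x (t - tau)) tl th))
  (Hy_formula : forall t, th <= t ->
     y t = RInt (fun tau => f tau *
             RInt (fun s => exp (- gamma * (t - s)) * beta (x s) * x s) (t - tau) t)
             tl th) :
  (forall C : R, 0 <= C -> is_lim x p_infty C ->
     (0 < gamma ->
        is_lim y p_infty
          (beta C * C * RInt (fun tau => f tau * (1 - exp (- gamma * tau)) / gamma) tl th))
     /\
     (gamma = 0 ->
        is_lim y p_infty (beta C * C * RInt (fun tau => tau * f tau) tl th)))
  /\
  (forall P : R, 0 < P -> (forall t, 0 <= t -> x (t + P) = x t) ->
     forall t, th <= t -> y (t + P) = y t).
Proof.
  set (h := fun s => beta (x s) * x s).
  assert (Hh_cont : forall s, 0 < s -> continuous h s)
    by (intros s; now apply continuous_flux).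
  assert (Hy : forall t, th <= t ->
    y t = RInt (fun tau => f tau * discounted_integral gamma h t tau) tl th).
  { intros t Ht. rewrite Hy_formula by exact Ht.
    apply RInt_ext. intros tau _. unfold discounted_integral, h. f_equal.
    apply RInt_ext. intros s _. apply Rmult_assoc. }
  split.
  - intros C HC Hx_lim.
    assert (Hh_lim : is_lim h p_infty (beta C * C)).
    { exact (is_lim_mult _ _ _ _ _
        (is_lim_on_nonneg_comp _ _ _ Hbeta_cont HC Hx_nonneg Hx_lim) Hx_lim I). }
    assert (Hy_ev : Rbar_locally' p_infty (fun t =>
      RInt (fun tau => f tau * discounted_integral gamma h t tau) tl th = y t)).
    { exists th. intros t Ht. symmetry. apply Hy. lra. }
    split.
    + intros Hgamma_pos.
      rewrite (RInt_ext _ (fun tau => f tau * ((1 - exp (- gamma * tau)) / gamma)))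
        by (intros tau _; simpl; field; lra).
      apply (is_lim_ext_loc _ _ _ _ Hy_ev).
      apply is_lim_density_discounted_integral; auto.
      * intros tau. apply (ex_derive_continuous (V := R_NormedModule)). auto_derive. easy.
      * intros t tau _. now apply discounted_integral_one_pos.
    + intros Hgamma0.
      rewrite (RInt_ext _ (fun tau => f tau * tau)) by (intros tau _; simpl; ring).
      apply (is_lim_ext_loc _ _ _ _ Hy_ev).
      apply is_lim_density_discounted_integral; auto.
      * intros tau. apply continuous_id.
      * intros t tau _. rewrite Hgamma0. apply discounted_integral_one_zero.
  - intros P HP Hx_per t Ht.
    rewrite (Hy t Ht), (Hy (t + P)) by lra.
    apply RInt_ext. intros tau Htau'. rewrite Rmin_left, Rmax_right in Htau' by lra.
    f_equal. apply discounted_integral_periodic; [exact Hh_cont | lra | lra |].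
    intros s Hs. unfold h. now rewrite Hx_per.
Qed.
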